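(* For integers $n\ge 0$ and $k\ge 0$ (as polynomial identity in $x$, $x\neq -1$), \[ \frac{d^{k}}{dx^{k}}w_{n}(x)=\frac{k!}{(1+x)^{k}}\sum_{m=k}^{n}\sum_{j=0}^{k}\binom{n}{m}\genfrac{\{}{\}}{0pt}{}{m}{k}\genfrac{[}{]}{0pt}{}{k+1}{j+1}\,w_{n-m+j}(x). \]
   Context: $\genfrac{\{}{\}}{0pt}{}{n}{k}$ denotes the Stirling numbers of the second kind and $\genfrac{[}{]}{0pt}{}{n}{k}$ the unsigned Stirling numbers of the first kind. The geometric polynomials are $w_n(x)=\sum_{k=0}^{n}\genfrac{\{}{\}}{0pt}{}{n}{k}k!\,x^k$. *)

From mathcomp Require Import all_boot all_order all_algebra.
Set Implicit Arguments. Unset Strict Implicit. Unset Printing Implicit Defensive.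
Import GRing.Theory Num.Theory.

Fixpoint stirling2 (n k : nat) : nat :=
  match n, k with
  | 0, 0 => 1
  | 0, _.+1 => 0
  | _.+1, 0 => 0
  | n'.+1, k'.+1 => k'.+1 * stirling2 n' k'.+1 + stirling2 n' k'
  end.

Fixpoint stirling1 (n k : nat) : nat :=
  match n, k with
  | 0, 0 => 1
  | 0, _.+1 => 0
  | _.+1, 0 => 0
  | n'.+1, k'.+1 => n' * stirling1 n' k'.+1 + stirling1 n' k'
  end.

Local Open Scope ring_scope.

Definition geom_poly (R : nzRingType) (n : nat) : {poly R} :=
  \sum_(k < n.+1) ((stirling2 n k * k`!)%:R *: 'X^k).

From mathcomp Require Import all_boot all_order all_algebra.
From mathcomp Require Import ring.
Import GRing.Theory Num.Theory.

(* Put H_k(n) := ('X^k * w_n)^`N(k) = \sum_i 'C(k + i, k) {n, i} i! 'X^i.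
   The Stirling convolution \sum_m 'C(n, m) {m, k} {n - m, j} = 'C(j + k, k) {n, j + k}
   expresses the k-th derivative through it:
   w_n^(k) = (k!)^2 \sum_m 'C(n, m) {m, k} H_k(n - m).
   On the other hand H_k(n + 1) + (k + 1) H_k(n) = (k + 1) (1 + 'X) H_(k+1)(n), and
   this recurrence matches the recurrence of the Stirling numbers of the first kind,
   so that by induction on k,  \sum_j [k + 1, j + 1] w_(n + j) = k! (1 + 'X)^k H_k(n).
   Substituting gives (1 + 'X)^k w_n^(k) as k! times the double sum of the theorem,
   whose terms with m < k vanish because {m, k} = 0. *)

Lemma stirling2_small n i : n < i -> stirling2 n i = 0.
Proof. by elim: n i => [|n IH] [|i] //= ?; rewrite !IH ?muln0 // ltnW. Qed.

Lemma stirling1_small n i : n < i -> stirling1 n i = 0.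
Proof. by elim: n i => [|n IH] [|i] //= ?; rewrite !IH ?muln0 // ltnW. Qed.

Definition stirling2_conv n k j :=
  \sum_(m < n.+1) 'C(n, m) * stirling2 m k * stirling2 (n - m) j.

Lemma stirling2_convolution n k j :
  stirling2_conv n k j = 'C(j + k, k) * stirling2 n (j + k).
Proof.
elim: n k j => [|n IH] k j.
  by rewrite /stirling2_conv big_ord1; case: k j => [|k] [|j]; rewrite /= ?muln0 ?addnS.
rewrite /stirling2_conv; case: k => [|k].
  rewrite big_ord_recl big1 => [|i _]; last by rewrite /= muln0 mul0n.
  by rewrite addn0 bin0 mul1n subn0 addn0 mul1n.
case: j => [|j].
  rewrite big_ord_recr /= big1 => [|i _]; first by rewrite subnn muln1 !add0n !binn.
  have i_le_n : i <= n by rewrite -ltnS.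
  by rewrite subSn // muln0.
have recl : \sum_(i < n.+1) 'C(n, i) * stirling2 i.+1 k.+1 * stirling2 (n - i) j.+1
    = k.+1 * stirling2_conv n k.+1 j.+1 + stirling2_conv n k j.+1.
  by rewrite /stirling2_conv big_distrr -big_split; apply: eq_bigr => i _ /=; ring.
have recr : \sum_(i < n.+1) 'C(n, i.+1) * stirling2 i.+1 k.+1 * stirling2 (n - i) j.+1
    = j.+1 * stirling2_conv n k.+1 j.+1 + stirling2_conv n k.+1 j.
  have -> : \sum_(i < n.+1) 'C(n, i.+1) * stirling2 i.+1 k.+1 * stirling2 (n - i) j.+1
      = \sum_(m < n.+2) 'C(n, m) * stirling2 m k.+1 * stirling2 (n.+1 - m) j.+1.
    by rewrite [RHS]big_ord_recl muln0 mul0n add0n.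
  rewrite big_ord_recr /= bin_small // mul0n addn0 /stirling2_conv big_distrr -big_split.
  apply: eq_bigr => i _; have i_le_n : i <= n by rewrite -ltnS.
  by rewrite subSn //=; ring.
rewrite big_ord_recl /= muln0 mul0n add0n.
under eq_bigr => i _ do rewrite subSS binS !mulnDl.
by rewrite big_split /= recl recr !IH !addnS !addSn /= binS; ring.
Qed.

Local Open Scope ring_scope.

Lemma coef_geom_poly (R : nzRingType) n i :
  (geom_poly R n)`_i = (stirling2 n i * i`!)%:R.
Proof.
rewrite /geom_poly -(poly_def _ (fun i => (stirling2 n i * i`!)%:R)) coef_poly.
by case: ltnP => // n_lt_i; rewrite stirling2_small.
Qed.

Lemma coef_nderivn_Xn_geom_poly (R : nzRingType) k n i :
  (('X^k * geom_poly R n)^`N(k))`_i = ('C(k + i, k) * stirling2 n i * i`!)%:R.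
Proof.
rewrite coef_nderivn coefXnM ltnNge leq_addr /= addKn coef_geom_poly.
by rewrite -mulrnA mulnC mulnA.
Qed.

Lemma nderivn_Xn_geom_polyS (R : comNzRingType) k n :
  ('X^k * geom_poly R n.+1)^`N(k) + ('X^k * geom_poly R n)^`N(k) *+ k.+1
  = ((1 + 'X) * ('X^(k.+1) * geom_poly R n)^`N(k.+1)) *+ k.+1.
Proof.
apply/polyP => i; rewrite coefD !coefMn mulrDl mul1r coefD coefXM.
rewrite !coef_nderivn_Xn_geom_poly; case: i => [|i] /=.
  by rewrite addr0 -mulrnA -!natrD -mulrnA !addn0 !binn; congr _%:R; ring.
rewrite -mulrnA -!natrD -mulrnA factS; congr _%:R.
have bin_diag : ((k.+1 + i.+1) * 'C(k + i.+1, k) = k.+1 * 'C(k.+1 + i.+1, k.+1))%N.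
  exact: mul_bin_diag.
have bin_left : (i.+1 * 'C(k + i.+1, k) = k.+1 * 'C(k.+1 + i, k.+1))%N.
  by rewrite mul_bin_left addSnnS addKn.
by rewrite [RHS]mulnC [RHS]mulnDr ![in RHS]mulnA -bin_diag -bin_left; ring.
Qed.

Lemma sum_stirling1S (V : nmodType) (f : nat -> V) k :
  \sum_(j < k.+2) f j *+ stirling1 k.+2 j.+1
  = (\sum_(j < k.+1) f j *+ stirling1 k.+1 j.+1) *+ k.+1
    + \sum_(j < k.+1) f j.+1 *+ stirling1 k.+1 j.+1.
Proof.
have stirling1SS j :
  stirling1 k.+2 j.+1 = (k.+1 * stirling1 k.+1 j.+1 + stirling1 k.+1 j)%N by [].
under eq_bigr => j _ do rewrite stirling1SS mulrnDr mulnC mulrnA.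
rewrite big_split -sumrMnl; congr (_ + _).
  by rewrite big_ord_recr stirling1_small // mulr0n mul0rn Monoid.mulm1.
by rewrite big_ord_recl mulr0n Monoid.mul1m.
Qed.

Lemma sum_stirling1_geom_poly (R : comNzRingType) k n :
  \sum_(j < k.+1) geom_poly R (n + j) *+ stirling1 k.+1 j.+1
  = ((1 + 'X) ^+ k * ('X^k * geom_poly R n)^`N(k)) *+ k`!.
Proof.
elim: k n => [|k IH] n.
  by rewrite big_ord1 addn0 expr0 expr0 !mul1r nderivn0.
rewrite (sum_stirling1S _ (fun j => geom_poly R (n + j))).
under [X in _ + X]eq_bigr => j _ do rewrite -addSnnS.
rewrite !IH.
have := nderivn_Xn_geom_polyS R k n.
move/(canRL (addrK _)) => ->.
by rewrite factS mulrnA [(1 + 'X) ^+ _.+1]exprS; ring.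
Qed.

Lemma derivn_geom_poly (R : nzRingType) n k :
  (geom_poly R n)^`(k)
  = (\sum_(m < n.+1) ('X^k * geom_poly R (n - m))^`N(k) *+ ('C(n, m) * stirling2 m k))
      *+ (k`! * k`!).
Proof.
apply/polyP => i; rewrite coef_derivn coef_geom_poly coefMn coef_sum.
under eq_bigr => m _ do rewrite coefMn coef_nderivn_Xn_geom_poly -mulrnA.
rewrite -natr_sum -!mulrnA; congr _%:R.
have -> : (\sum_(m < n.+1) 'C(k + i, k) * stirling2 (n - m) i * i`! * ('C(n, m) * stirling2 m k)
   = stirling2_conv n k i * ('C(k + i, k) * i`!))%N.
  by rewrite /stirling2_conv big_distrl; apply: eq_bigr => m _ /=; ring.
rewrite stirling2_convolution addnC -bin_ffact -(bin_fact (leq_addl i k)) addnK.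
ring.
Qed.

Lemma derivn_geom_poly_stirling (R : comNzRingType) n k :
  (1 + 'X) ^+ k * (geom_poly R n)^`(k)
  = (\sum_(m < n.+1) (\sum_(j < k.+1) geom_poly R (n - m + j) *+ stirling1 k.+1 j.+1)
        *+ ('C(n, m) * stirling2 m k)) *+ k`!.
Proof.
rewrite derivn_geom_poly mulrnA !mulrnAr mulr_sumr -sumrMnl; congr (_ *+ _).
apply: eq_bigr => m _.
by rewrite sum_stirling1_geom_poly mulrnAr mulrnAC.
Qed.

Theorem mainTheorem2 (R : numFieldType) (n k : nat) (x : R) :
  x != -1 ->
  ((geom_poly R n)^`(k)).[x] =
    (k`!)%:R / (1 + x) ^+ k *
    \sum_(k <= m < n.+1) \sum_(j < k.+1)
       ('C(n, m) * stirling2 m k * stirling1 k.+1 j.+1)%:R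
         * (geom_poly R (n - m + j)).[x].
Proof.
move=> x_neq_m1.
have pow_neq0 : (1 + x) ^+ k != 0 by rewrite expf_neq0 // addrC addr_eq0.
have := congr1 (horner^~ x) (derivn_geom_poly_stirling R n k) : _.[x] = _.[x].
rewrite hornerM horner_exp hornerD hornerC hornerX hornerMn horner_sum => eq_x.
apply: (mulfI pow_neq0); rewrite eq_x mulrA mulrCA mulfV // mulr1 mulr_natl.
congr (_ *+ _); rewrite big_geq_mkord big_mkcondr; apply: eq_bigr => m _.
case: leqP => [_ | m_lt_k]; last by rewrite stirling2_small // muln0 mulr0n horner0.
rewrite hornerMn horner_sum -sumrMnl; apply: eq_bigr => j _.
by rewrite hornerMn mulr_natl -mulrnA mulnC.
Qed.
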